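(* (a) If $\mathcal{T}_1=(V,\mathsf{p}_1)$ and $\mathcal{T}_2=(V,\mathsf{p}_2)$ are directed forests, then $\mathcal{T}_1$ is thinner than $\mathcal{T}_2$ if and only if $\mathrm{Chi}_{\mathcal{T}_1}(v)\subseteq\mathrm{Chi}_{\mathcal{T}_2}(v)$ for every $v\in V$. (b) Thickness (''thinner than'') is a partial order on the set of all directed forests with a fixed set of vertices $V$. (c) The degenerate forest $(V,\mathrm{id}_V)$ is the smallest element with respect to this partial order among directed forests with vertex set $V$. (d) The maximal elements with respect to this partial order are precisely the directed trees and the rootless directed forests.
   Context: A directed forest is a pair $\mathcal{T}=(V,\mathsf{p})$ where $V$ is a nonempty set and $\mathsf{p}\colon V\to V$ satisfies: if $n\in\mathbb{N}$, $v\in V$ and $\mathsf{p}^n(v)=v$, then $\mathsf{p}(v)=v$. Roots: $\mathrm{root}(\mathcal{T})=\{v:\mathsf{p}(v)=v\}$; $\mathcal{T}$ is rootless if it has no roots. Children: $\mathrm{Chi}_{\mathcal{T}}(v)=\{u\in V:\mathsf{p}(u)=v\neq u\}$. The trees of $\mathcal{T}$ are the connected components of the graph with vertex set $V$ and edges $\{\mathsf{p}(u),u\}$ for $u\notin\mathrm{root}(\mathcal{T})$ (equivalently, classes of the relation $u\sim w$ iff $\mathsf{p}^m(u)=\mathsf{p}^n(w)$ for some $m,n\geq0$). A directed tree is a directed forest having exactly one tree. For directed forests $\mathcal{T}_1=(V,\mathsf{p}_1)$, $\mathcal{T}_2=(V,\mathsf{p}_2)$ on the same vertex set, $\mathcal{T}_1$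 is thinner than $\mathcal{T}_2$ ($\mathcal{T}_2$ thicker than $\mathcal{T}_1$) if $\mathsf{p}_1(v)\in\{v,\mathsf{p}_2(v)\}$ for all $v\in V$. *)

From Stdlib Require Import Arith.

Definition piter {V : Type} (n : nat) (p : V -> V) (v : V) : V := Nat.iter n p v.

(* Directed forest: every periodic point of p (period n >= 1) is a fixed point.
   (n ranges over positive naturals; n = 0 would force p = id.) *)
Definition directed_forest {V : Type} (p : V -> V) : Prop :=
  forall (n : nat) (v : V), piter (S n) p v = v -> p v = v.

Definition is_root {V : Type} (p : V -> V) (v : V) : Prop := p v = v.

Definition rootless {V : Type} (p : V -> V) : Prop := forall v : V, ~ is_root p v.

Definition Chi {V : Type} (p : V -> V) (v u : V) : Prop := p u = v /\ v <> u.

Definition same_tree {V : Type} (p : V -> V) (u w : V) : Prop :=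
  exists m n : nat, piter m p u = piter n p w.

(* A directed tree: a directed forest with exactly one tree
   (V is assumed nonempty, so: all vertices lie in the same tree). *)
Definition directed_tree {V : Type} (p : V -> V) : Prop :=
  directed_forest p /\ forall u w : V, same_tree p u w.

Definition thinner {V : Type} (p1 p2 : V -> V) : Prop :=
  forall v : V, p1 v = v \/ p1 v = p2 v.

(** A forest [p] can only be thickened by redirecting some of its roots.  If
    [p] is a tree, the only root [r] is reachable from every vertex, and in a
    thicker forest [q] the new parent [q r] would climb back to [r] along
    [p]-edges that [q] keeps, closing a cycle; if [p] is rootless there is
    nothing to redirect.  Conversely, if [p] has a root [r] and a vertex [x]
    outside the tree of [r], sending [r] to [x] gives a strictly thicker
    forest: a cycle through [r] would have to return from the tree of [x],
    where the new map agrees with [p] and never meets [r]. *)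

From Stdlib Require Import Arith Classical FunctionalExtensionality ClassicalEpsilon.

Section Iterates.

Context {V : Type} (p : V -> V).

Lemma piter_S_r n v : piter (S n) p v = piter n p (p v).
Proof. unfold piter. induction n as [|n IH]; simpl in *; [reflexivity|now rewrite <- IH]. Qed.

Lemma piter_add a b v : piter (a + b) p v = piter a p (piter b p v).
Proof. unfold piter. induction a as [|a IH]; simpl; [reflexivity|now rewrite IH]. Qed.

Lemma piter_root r m : p r = r -> piter m p r = r.
Proof. intro Hr. unfold piter. induction m as [|m IH]; simpl; [reflexivity|now rewrite IH]. Qed.

Lemma same_tree_refl v : same_tree p v v.
Proof. now exists 0, 0. Qed.

Lemma same_tree_sym u w : same_tree p u w -> same_tree p w u.
Proof. intros [m [n H]]. now exists n, m. Qed.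

Lemma same_tree_trans u v w : same_tree p u v -> same_tree p v w -> same_tree p u w.
Proof.
  intros [a [b H1]] [c [d H2]]. exists (c + a), (b + d).
  rewrite piter_add, H1, <- piter_add, Nat.add_comm, piter_add, H2, <- piter_add.
  reflexivity.
Qed.

Lemma same_tree_piter k v : same_tree p (piter k p v) v.
Proof. now exists 0, k. Qed.

End Iterates.

Section Thickness.

Context {V : Type}.
Implicit Types p q s : V -> V.

Lemma thinnerP p q : thinner p q <-> forall v u, Chi p v u -> Chi q v u.
Proof.
  split.
  - intros T v u [Hu Hvu]. destruct (T u) as [E|E].
    + congruence.
    + split; congruence.
  - intros H v. destruct (classic (p v = v)) as [E|E]; [now left|right].
    destruct (H (p v) v) as [Hq _]; [split; auto|congruence].
Qed.

Lemma thinner_refl p : thinner p p.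
Proof. now right. Qed.

Lemma thinner_antisym p q : thinner p q -> thinner q p -> p = q.
Proof.
  intros T1 T2. apply functional_extensionality. intro v.
  destruct (T1 v), (T2 v); congruence.
Qed.

Lemma thinner_trans p q s : thinner p q -> thinner q s -> thinner p s.
Proof. intros T1 T2 v. destruct (T1 v), (T2 v); [left|left|left|right]; congruence. Qed.

Lemma directed_forest_id : directed_forest (fun v : V => v).
Proof. now intros n v _. Qed.

Lemma thinner_id p : thinner (fun v : V => v) p.
Proof. now left. Qed.

Lemma thinner_off_root p q v : thinner p q -> p v <> v -> q v = p v.
Proof. intros T Hv. now destruct (T v). Qed.

End Thickness.

Section Maximal.

Context {V : Type}.
Implicit Types p q : V -> V.

Lemma rootless_thinner_eq p q : rootless p -> thinner p q -> q = p.
Proof.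
  intros R T. apply functional_extensionality. intro v.
  destruct (T v) as [E|E]; [exfalso; exact (R v E)|now symmetry].
Qed.

Lemma piter_thinner_to_root p q r m w :
  thinner p q -> (forall u, p u = u -> u = r) ->
  piter m p w = r -> exists k, piter k q w = r.
Proof.
  intros T Runiq. revert w. induction m as [|m IH]; intros w Hw.
  - now exists 0.
  - destruct (classic (w = r)) as [->|Ew]; [now exists 0|].
    assert (Hq : q w = p w) by (apply thinner_off_root; auto).
    rewrite piter_S_r in Hw. destruct (IH _ Hw) as [k Hk].
    exists (S k). now rewrite piter_S_r, Hq.
Qed.

Lemma connected_thinner_eq p q :
  (forall u w, same_tree p u w) -> directed_forest q -> thinner p q -> q = p.
Proof.
  intros Hconn Fq T. apply functional_extensionality. intro v.
  destruct (T v) as [Hv|E]; [rewrite Hv|now symmetry].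
  assert (Runiq : forall u, p u = u -> u = v).
  { intros u Hu. destruct (Hconn u v) as [m [n H]].
    now rewrite !piter_root in H. }
  destruct (Hconn (q v) v) as [m [n H]]. rewrite (piter_root p v n Hv) in H.
  destruct (piter_thinner_to_root p q v m (q v) T Runiq H) as [k Hk].
  apply (Fq k v). now rewrite piter_S_r.
Qed.

End Maximal.

Definition redirect {V : Type} (p : V -> V) (r x : V) (v : V) : V :=
  if excluded_middle_informative (v = r) then x else p v.

Section Redirect.

Context {V : Type} (p : V -> V) (r x : V).
Hypothesis root_r : p r = r.
Hypothesis x_off_tree : ~ same_tree p x r.

Let q := redirect p r x.

Lemma redirect_at : q r = x.
Proof. unfold q, redirect. now destruct (excluded_middle_informative (r = r)). Qed.

Lemma redirect_off v : v <> r -> q v = p v.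
Proof. intro Hv. unfold q, redirect. now destruct (excluded_middle_informative (v = r)). Qed.

Lemma thinner_redirect : thinner p q.
Proof.
  intro v. destruct (classic (v = r)) as [->|Ev]; [now left|right].
  now rewrite redirect_off.
Qed.

Lemma redirect_neq : q <> p.
Proof.
  intro E. apply x_off_tree. rewrite <- redirect_at, E, root_r.
  apply same_tree_refl.
Qed.

Lemma off_tree_neq y : same_tree p y x -> y <> r.
Proof. intros Hy ->. now apply x_off_tree, same_tree_sym. Qed.

Lemma piter_redirect_in_tree k y : same_tree p y x -> piter k q y = piter k p y.
Proof.
  intro Hy. induction k as [|k IH]; [reflexivity|].
  change (q (piter k q y) = p (piter k p y)). rewrite IH.
  apply redirect_off, off_tree_neq, (same_tree_trans p _ y); [apply same_tree_piter|exact Hy].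
Qed.

Lemma same_tree_piter_redirect k y : same_tree p y x -> same_tree p (piter k q y) x.
Proof.
  intro Hy. rewrite piter_redirect_in_tree by exact Hy.
  apply (same_tree_trans p _ y); [apply same_tree_piter|exact Hy].
Qed.

(* A [q]-path agrees with the [p]-path until it passes [r], and from then on
   it stays in the tree of [x]. *)
Lemma piter_redirect_cases k v :
  piter k q v = piter k p v \/ same_tree p (piter k q v) x.
Proof.
  induction k as [|k [E|Hx]]; [now left| |].
  - change (q (piter k q v) = p (piter k p v) \/ same_tree p (q (piter k q v)) x).
    destruct (classic (piter k q v = r)) as [Er|Er].
    + right. rewrite Er, redirect_at. apply same_tree_refl.
    + left. now rewrite redirect_off, E.
  - right. change (same_tree p (q (piter k q v)) x).
    rewrite redirect_off by now apply off_tree_neq.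
    apply (same_tree_trans p _ (piter k q v)); [apply (same_tree_piter p 1)|exact Hx].
Qed.

Lemma directed_forest_redirect : directed_forest p -> directed_forest q.
Proof.
  intros Fp n v Hc. destruct (classic (v = r)) as [->|Ev].
  - exfalso. rewrite piter_S_r, redirect_at in Hc.
    apply x_off_tree, same_tree_sym. rewrite <- Hc.
    apply same_tree_piter_redirect, same_tree_refl.
  - rewrite redirect_off by exact Ev. apply (Fp n).
    destruct (piter_redirect_cases (S n) v) as [E|Hx]; [congruence|].
    rewrite Hc in Hx. rewrite <- (piter_redirect_in_tree (S n) v Hx). exact Hc.
Qed.

End Redirect.

Lemma maximal_tree_or_rootless {V : Type} (p : V -> V) :
  directed_forest p ->
  (forall q, directed_forest q -> thinner p q -> q = p) ->
  directed_tree p \/ rootless p.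
Proof.
  intros Fp Hmax. destruct (classic (rootless p)) as [R|R]; [now right|left].
  destruct (not_all_not_ex _ _ (fun N => R (fun v Hv => N v Hv))) as [r Hr].
  split; [exact Fp|].
  assert (Hconn : forall u, same_tree p u r).
  { intro u. apply NNPP. intro Hu.
    apply (redirect_neq p r u Hr Hu).
    apply Hmax; [now apply directed_forest_redirect|now apply thinner_redirect]. }
  intros u w. apply (same_tree_trans p _ r); [apply Hconn|apply same_tree_sym, Hconn].
Qed.

Theorem theorem3p5 (V : Type) (HV : inhabited V) :
  (* (a) *)
  (forall p1 p2 : V -> V, directed_forest p1 -> directed_forest p2 ->
     (thinner p1 p2 <-> forall v u : V, Chi p1 v u -> Chi p2 v u))
  /\
  (* (b) partial order on directed forests with vertex set V *)
  ((forall p : V -> V, directed_forest p -> thinner p p)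
   /\ (forall p q : V -> V, directed_forest p -> directed_forest q ->
         thinner p q -> thinner q p -> p = q)
   /\ (forall p q r : V -> V, directed_forest p -> directed_forest q ->
         directed_forest r -> thinner p q -> thinner q r -> thinner p r))
  /\
  (* (c) the degenerate forest is the least element *)
  (directed_forest (fun v : V => v)
   /\ forall p : V -> V, directed_forest p -> thinner (fun v : V => v) p)
  /\
  (* (d) maximal elements = directed trees and rootless directed forests *)
  (forall p : V -> V, directed_forest p ->
     ((forall q : V -> V, directed_forest q -> thinner p q -> q = p)
      <-> (directed_tree p \/ rootless p))).
Proof.
  split; [|split; [|split]].
  - intros p1 p2 _ _. apply thinnerP.
  - split; [|split].
    + intros p _. apply thinner_refl.
    + intros p q _ _. apply thinner_antisym.
    + intros p q r _ _ _. apply thinner_trans.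
  - split; [apply directed_forest_id|intros p _; apply thinner_id].
  - intros p Fp. split; [now apply maximal_tree_or_rootless|].
    intros [[_ Hconn]|R] q Fq T.
    + now apply connected_thinner_eq.
    + now apply rootless_thinner_eq.
Qed.
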